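(* Let $(K,\delta)$ be a differential field of characteristic zero and $x\in K$ with $\delta(x)=1$, and let $f\in K$. (i) Let $n$ be a positive integer. Then $f=\delta^n(g)$ for some $g\in K$ if and only if for every $i$ with $0\le i\le n-1$ there exists $h_i\in K$ with $x^if=\delta(h_i)$. (ii) $f$ is stable in $(K,\delta)$ if and only if for every $i\in\mathbb{N}$ there exists $g_i\in K$ with $x^if=\delta(g_i)$.
   Context: A differential field $(K,\delta)$ is a field with an additive map $\delta$ satisfying $\delta(fg)=f\delta(g)+g\delta(f)$. An element $f\in K$ is stable in $(K,\delta)$ if there is a sequence $(a_i)_{i\ge0}$ in $K$ with $a_0=f$ and $\delta(a_{i+1})=a_i$ for all $i\in\mathbb{N}$. *)

From mathcomp Require Import all_boot all_order all_algebra.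
Set Implicit Arguments. Unset Strict Implicit. Unset Printing Implicit Defensive.
Import GRing.Theory.
Local Open Scope ring_scope.

Definition is_derivation (K : fieldType) (delta : K -> K) : Prop :=
  (forall f g : K, delta (f + g) = delta f + delta g) /\
  (forall f g : K, delta (f * g) = f * delta g + g * delta f).

Definition stable (K : fieldType) (delta : K -> K) (f : K) : Prop :=
  exists a : nat -> K, a 0%N = f /\ forall i : nat, delta (a i.+1) = a i.

(* If [delta F = f], the Leibniz rule and [delta x = 1] give
   [delta (x^(i+1) F) = (i+1) x^i F + x^(i+1) f].  Hence, in characteristic
   zero, [x^(i+1) f] has a primitive exactly when [x^i F] has one.  Peeling
   off one derivative at a time, [f] is an [n]-th derivative iff
   [x^i f] is a derivative for all [i < n]; for stability the condition
   "every [x^i f] is a derivative" passes from [f] to a primitive of [f],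
   so primitives can be chosen forever. *)

From mathcomp Require Import all_boot all_order all_algebra.
From mathcomp Require Import ring.
From Stdlib Require Import ClassicalEpsilon.

Set Implicit Arguments.
Unset Strict Implicit.
Unset Printing Implicit Defensive.
Local Open Scope ring_scope.
Import GRing.Theory.

Section Derivation.
Variables (K : fieldType) (delta : K -> K).
Hypothesis hdelta : is_derivation delta.

Let derivationD : forall a b, delta (a + b) = delta a + delta b := proj1 hdelta.
Let derivationM : forall a b, delta (a * b) = a * delta b + b * delta a :=
  proj2 hdelta.

Lemma derivation0 : delta 0 = 0.
Proof. by apply: (addrI (delta 0)); rewrite -derivationD !addr0. Qed.

Lemma derivationB a b : delta (a - b) = delta a - delta b.
Proof.
have derivationN c : delta (- c) = - delta c.
  by apply: (addrI (delta c)); rewrite -derivationD !subrr derivation0.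
by rewrite derivationD derivationN.
Qed.

Lemma derivation1 : delta 1 = 0.
Proof.
apply: (addrI (delta 1)); rewrite addr0.
by rewrite -{1 2}(mul1r (delta 1)) -derivationM mulr1.
Qed.

Lemma derivation_nat n : delta n%:R = 0.
Proof.
elim: n => [|n IHn]; first exact: derivation0.
by rewrite mulrS derivationD derivation1 IHn addr0.
Qed.

Lemma derivation_const_inv c : delta c = 0 -> delta c^-1 = 0.
Proof.
have [-> _|c_neq0 dc0] := eqVneq c 0; first by rewrite invr0 derivation0.
have := derivationM c c^-1.
rewrite mulfV // derivation1 dc0 mulr0 addr0 => /esym/eqP.
by rewrite mulf_eq0 (negbTE c_neq0) => /eqP.
Qed.

Lemma derivation_constM c a : delta c = 0 -> delta (c * a) = c * delta a.
Proof. by move=> dc0; rewrite derivationM dc0 mulr0 addr0. Qed.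

Lemma derivationXn a n : delta (a ^+ n.+1) = n.+1%:R * a ^+ n * delta a.
Proof.
elim: n => [|n IHn]; first by rewrite expr1 expr0 mulr1 mul1r.
rewrite exprS derivationM IHn (mulrS _ n.+1) exprS; ring.
Qed.

Definition integrable (f : K) : Prop := exists g : K, f = delta g.

Lemma stable_iter f : stable delta f -> forall n, exists g, f = iter n delta g.
Proof.
move=> [a [a0 da]] n; exists (a n); rewrite -a0.
by elim: n => [//|n IHn]; rewrite IHn iterSr da.
Qed.

Lemma stable_of_primitive_closed (P : K -> Prop) :
  (forall y, P y -> exists z, P z /\ delta z = y) ->
  forall f, P f -> stable delta f.
Proof.
move=> closedP f Pf.
pose prim y := proj1_sig (classical_indefinite_description
  (fun z => P z /\ delta z = y) (inhabits y)).
have primP y : P y -> P (prim y) /\ delta (prim y) = y.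
  by move=> /closedP; rewrite /prim; case: classical_indefinite_description.
have Piter n : P (iter n prim f) by elim: n => [//|n IHn]; exact: (primP _ IHn).1.
by exists (fun n => iter n prim f); split => // n; exact: (primP _ (Piter n)).2.
Qed.

Variable x : K.
Hypothesis hx : delta x = 1.

Lemma integrable_moment_succ f F i :
  delta F = f -> integrable (x ^+ i * F) -> integrable (x ^+ i.+1 * f).
Proof.
move=> <- [H hH]; exists (x ^+ i.+1 * F - i.+1%:R * H).
by rewrite derivationB derivationM derivationXn hx derivation_constM
  ?derivation_nat // -hH; ring.
Qed.

Lemma integrable_moment_pred f h i : i.+1%:R != 0 :> K ->
  delta h = f -> integrable (x ^+ i.+1 * f) -> integrable (x ^+ i * h).
Proof.
move=> i1_neq0 hh [H hH]; exists (i.+1%:R^-1 * (x ^+ i.+1 * h - H)).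
rewrite derivation_constM ?derivation_const_inv ?derivation_nat //.
rewrite derivationB derivationM derivationXn hx hh -hH mulr1.
by rewrite addrC addKr mulrCA mulKf // mulrC.
Qed.

Lemma iter_integrable_moments n g i :
  (i < n)%N -> integrable (x ^+ i * iter n delta g).
Proof.
elim: n i => [//|n IHn] [|i] lt_i_n /=.
  by exists (iter n delta g); rewrite mul1r.
exact: integrable_moment_succ (IHn i lt_i_n).
Qed.

Hypothesis hchar : [pchar K] =i pred0.

Let natS_neq0 i : i.+1%:R != 0 :> K.
Proof. by have /pcharf0P -> := hchar. Qed.

Lemma integrable_moments_iter n f :
  (forall i, (i < n.+1)%N -> integrable (x ^+ i * f)) ->
  exists g, f = iter n.+1 delta g.
Proof.
elim: n f => [|n IHn] f hf; have [h hh] := hf 0%N isT; rewrite mul1r in hh.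
  by exists h.
have [g hg] : exists g, h = iter n.+1 delta g.
  apply: IHn => i lt_i_n.
  exact: integrable_moment_pred (natS_neq0 i) (esym hh) (hf i.+1 lt_i_n).
by exists g; rewrite hh hg.
Qed.

Lemma integrable_moments_primitive f :
  (forall i, integrable (x ^+ i * f)) ->
  exists h, (forall i, integrable (x ^+ i * h)) /\ delta h = f.
Proof.
move=> hf; have [h hh] := hf 0%N; rewrite mul1r in hh.
exists h; split => // i.
exact: integrable_moment_pred (natS_neq0 i) (esym hh) (hf i.+1).
Qed.

End Derivation.

Theorem lemma2p10 (K : fieldType) (delta : K -> K)
  (hdelta : is_derivation delta)
  (hchar : [pchar K] =i pred0)
  (x : K) (hx : delta x = 1) (f : K) :
  (forall n : nat, (0 < n)%N ->
     ((exists g : K, f = iter n delta g) <->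
      (forall i : nat, (i < n)%N -> exists h : K, x ^+ i * f = delta h)))
  /\
  (stable delta f <-> (forall i : nat, exists g : K, x ^+ i * f = delta g)).
Proof.
split.
  move=> [//|n] _; split => [[g ->]|].
    exact: iter_integrable_moments.
  exact: integrable_moments_iter.
split => [/stable_iter iterf i|hf].
  have [g ->] := iterf i.+1.
  exact: iter_integrable_moments.
exact: (stable_of_primitive_closed (integrable_moments_primitive hdelta hx hchar)).
Qed.
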